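(* Let $\succcurlyeq$ be a preference relation on the set $\mathcal{B}$ of bets over a propositional language $\mathcal{L}$. The following are equivalent: (1) $\succcurlyeq$ satisfies Non-Triviality, Objective Expected Utility and Inclusion/Exclusion; (2) $\succcurlyeq$ is represented by a subjective model of uncertainty $(\Omega,t,\lambda)$ with $\lambda$ additive and $t$ exact and $\land$-distributive; (3) $\succcurlyeq$ is represented by a subjective model of uncertainty $(\Omega',t',\lambda')$ with $\lambda'$ totally monotone and $t'$ sound.
   Context: Let $\mathbb{P}$ be a set of propositional variables containing distinguished $\mathbf{T}$, $\mathbf{F}$, and $\mathcal{L}$ the language generated by $\neg,\land,\lor$; $\phi\implies\psi$ means $\psi$ is deducible from $\phi$ in classical propositional logic, $\phi\iff\psi$ means mutual deducibility. A bet is a finitely supported $b:\mathcal{L}\to[0,1]$ summing to $1$; $b_\phi$ is the point-mass bet on $\phi$; the set $\mathcal{B}$ of bets is a mixture space under pointwise mixtures, and $\{\alpha_1 b_{\phi_1},\dots\}$ denotes the bet with weight $\alpha_i$ on $\phi_i$. A truth valuation on $\Omega$ is $t:\mathcal{L}\to2^\Omega$ with $t(\mathbf{T})=\Omega,t(\mathbf{F})=\emptyset$; exact: $\phi\iff\psi\Rightarrow t(\phi)=t(\psi)$; monotone: $\phi\implies\psi\Rightarrow t(\phi)\subseteq t(\psi)$; symmetric: $t(\neg\phi)=\Omega\setminus t(\phi)$; $\land$-distributive: $t(\phi\land\psi)=t(\phi)\cap t(\psi)$; sound: all four. A likelihood appraisal on a field $\Sigma\subseteq2^\Omega$ is $\lambda:\Sigma\to[0,1]$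 with $\lambda(\emptyset)=0,\lambda(\Omega)=1$; additive if finitely additive; totally monotone if for all $A_1,\dots,A_n\in\Sigma$, $\lambda(\bigcup_i A_i)\ge\sum_{\emptyset\ne I\subseteq\{1,\dots,n\}}(-1)^{|I|+1}\lambda(\bigcap_{i\in I}A_i)$. A subjective model $(\Omega,t,\lambda)$ ($\lambda$ on a field containing $t(\mathcal{L})$) represents $\succcurlyeq$ if $b\succcurlyeq b'\iff\sum_\phi b(\phi)\lambda(t(\phi))\ge\sum_\phi b'(\phi)\lambda(t(\phi))$. Non-Triviality: $b_{\mathbf{T}}\succcurlyeq b_\phi\succcurlyeq b_{\mathbf{F}}$ for all $\phi$ and $b_{\mathbf{T}}\succ b_{\mathbf{F}}$. Objective Expected Utility: $\succcurlyeq$ is complete, transitive, Archimedean and satisfies Independence. Inclusion/Exclusion: for any $\phi_1,\dots,\phi_n$ and $\psi$ with $\phi_i\implies\psi$ for all $i$, with $E,O$ the collections of nonempty subsets of $\{1,\dots,n\}$ of even and odd cardinality, $\phi_I=\bigwedge_{i\in I}\phi_i$, $m=\max\{|E|+1,|O|\}$: $\{\tfrac1m b_\psi,\ \tfrac1m b_{\phi_I}\ (I\in E),\ (1-\tfrac{|E|+1}{m})b_{\mathbf{F}}\}\succcurlyeq\{\tfrac1m b_{\phi_I}\ (I\in O),\ (1-\tfrac{|O|}{m})b_{\mathbf{F}}\}$. *)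

From Stdlib Require Import Bool Reals Lra List Arith ClassicalEpsilon.
Import ListNotations.
Open Scope R_scope.

Inductive form (P : Type) : Type :=
| Var : P -> form P
| Neg : form P -> form P
| And : form P -> form P -> form P
| Or  : form P -> form P -> form P.
Arguments Var {P} _.
Arguments Neg {P} _.
Arguments And {P} _ _.
Arguments Or  {P} _ _.

Fixpoint feval {P : Type} (v : P -> bool) (f : form P) : bool :=
  match f with
  | Var p => v p
  | Neg g => negb (feval v g)
  | And g h => feval v g && feval v h
  | Or g h => feval v g || feval v h
  end.

(* phi ==> psi : psi is deducible from phi in classical propositional logic,
   where the distinguished variables T and F are the constants true / false.
   By soundness and completeness this is the semantic consequence relation. *)
Definition deduces {P : Type} (PT PF : P) (phi psi : form P) : Prop :=
  forall v : P -> bool, v PT = true -> v PF = false ->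
    feval v phi = true -> feval v psi = true.

Definition equiv {P : Type} (PT PF : P) (phi psi : form P) : Prop :=
  deduces PT PF phi psi /\ deduces PT PF psi phi.

Definition sum_list (l : list R) : R := fold_right Rplus 0 l.

Fixpoint subsets (l : list nat) : list (list nat) :=
  match l with
  | [] => [[]]
  | x :: l' => subsets l' ++ map (cons x) (subsets l')
  end.

Definition nonempty_subsets (n : nat) : list (list nat) :=
  filter (fun I => Nat.ltb 0 (length I)) (subsets (seq 0 n)).
Definition even_subsets (n : nat) : list (list nat) :=
  filter (fun I => andb (Nat.ltb 0 (length I)) (Nat.even (length I))) (subsets (seq 0 n)).
Definition odd_subsets (n : nat) : list (list nat) :=
  filter (fun I => Nat.odd (length I)) (subsets (seq 0 n)).

(* phi_I = /\_{i in I} phi_i  (I nonempty; the empty case is never used). *)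
Fixpoint bigand {P : Type} (PT : P) (phi : nat -> form P) (I : list nat) : form P :=
  match I with
  | [] => Var PT
  | [i] => phi i
  | i :: I' => And (phi i) (bigand PT phi I')
  end.

Definition fsupp {P : Type} (b : form P -> R) (s : list (form P)) : Prop :=
  NoDup s /\ forall phi, b phi <> 0 -> In phi s.

Definition is_bet {P : Type} (b : form P -> R) : Prop :=
  (forall phi, 0 <= b phi <= 1) /\
  exists s, fsupp b s /\ sum_list (map b s) = 1.

Definition pm {P : Type} (phi : form P) : form P -> R :=
  fun psi => if excluded_middle_informative (psi = phi) then 1 else 0.

Definition mix {P : Type} (a : R) (b b' : form P -> R) : form P -> R :=
  fun phi => a * b phi + (1 - a) * b' phi.

Definition wbet {P : Type} (l : list (R * form P)) : form P -> R :=
  fun psi => sum_list (map (fun p => fst p * pm (snd p) psi) l).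

Section Prefs.
Context {P : Type} (PT PF : P) (pref : (form P -> R) -> (form P -> R) -> Prop).

Definition spref (b b' : form P -> R) : Prop := pref b b' /\ ~ pref b' b.

Definition NonTriviality : Prop :=
  (forall phi, pref (pm (Var PT)) (pm phi) /\ pref (pm phi) (pm (Var PF))) /\
  spref (pm (Var PT)) (pm (Var PF)).

Definition Complete : Prop :=
  forall b b', is_bet b -> is_bet b' -> pref b b' \/ pref b' b.

Definition Transitive : Prop :=
  forall b b' b'', is_bet b -> is_bet b' -> is_bet b'' ->
    pref b b' -> pref b' b'' -> pref b b''.

Definition Archimedean : Prop :=
  forall b b' b'', is_bet b -> is_bet b' -> is_bet b'' ->
    spref b b' -> spref b' b'' ->
    exists a c, 0 < a < 1 /\ 0 < c < 1 /\
      spref (mix a b b'') b' /\ spref b' (mix c b b'').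

Definition Independence : Prop :=
  forall b b' b'' a, is_bet b -> is_bet b' -> is_bet b'' -> 0 < a < 1 ->
    (pref b b' <-> pref (mix a b b'') (mix a b' b'')).

Definition ObjectiveEU : Prop :=
  Complete /\ Transitive /\ Archimedean /\ Independence.

Definition InclusionExclusion : Prop :=
  forall (n : nat) (phi : nat -> form P) (psi : form P),
    (forall i, (i < n)%nat -> deduces PT PF (phi i) psi) ->
    let Ev := even_subsets n in
    let Od := odd_subsets n in
    let m := INR (Nat.max (length Ev + 1) (length Od)) in
    pref
      (wbet ((1 / m, psi) :: map (fun I => (1 / m, bigand PT phi I)) Ev
              ++ [(1 - INR (length Ev + 1) / m, Var PF)]))
      (wbet (map (fun I => (1 / m, bigand PT phi I)) Od
              ++ [(1 - INR (length Od) / m, Var PF)])).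
End Prefs.

Section Models.
Context {P : Type} (PT PF : P) {Omega : Type}.

Definition truth_valuation (t : form P -> Omega -> Prop) : Prop :=
  t (Var PT) = (fun _ => True) /\ t (Var PF) = (fun _ => False).

Definition exact (t : form P -> Omega -> Prop) : Prop :=
  forall phi psi, equiv PT PF phi psi -> t phi = t psi.
Definition monotone (t : form P -> Omega -> Prop) : Prop :=
  forall phi psi, deduces PT PF phi psi -> forall w, t phi w -> t psi w.
Definition symmetric (t : form P -> Omega -> Prop) : Prop :=
  forall phi, t (Neg phi) = (fun w => ~ t phi w).
Definition and_distributive (t : form P -> Omega -> Prop) : Prop :=
  forall phi psi, t (And phi psi) = (fun w => t phi w /\ t psi w).
Definition sound (t : form P -> Omega -> Prop) : Prop :=
  exact t /\ monotone t /\ symmetric t /\ and_distributive t.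

Definition is_field (Sigma : (Omega -> Prop) -> Prop) : Prop :=
  Sigma (fun _ => False) /\
  (forall A, Sigma A -> Sigma (fun w => ~ A w)) /\
  (forall A B, Sigma A -> Sigma B -> Sigma (fun w => A w \/ B w)).

(* likelihood appraisal on Sigma (lam is only relevant on Sigma) *)
Definition appraisal (Sigma : (Omega -> Prop) -> Prop) (lam : (Omega -> Prop) -> R) : Prop :=
  (forall A, Sigma A -> 0 <= lam A <= 1) /\
  lam (fun _ => False) = 0 /\ lam (fun _ => True) = 1.

Definition additive (Sigma : (Omega -> Prop) -> Prop) (lam : (Omega -> Prop) -> R) : Prop :=
  forall A B, Sigma A -> Sigma B -> (forall w, A w -> B w -> False) ->
    lam (fun w => A w \/ B w) = lam A + lam B.

Definition totally_monotone (Sigma : (Omega -> Prop) -> Prop) (lam : (Omega -> Prop) -> R) : Prop :=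
  forall (n : nat) (A : nat -> Omega -> Prop),
    (forall i, (i < n)%nat -> Sigma (A i)) ->
    lam (fun w => exists i, (i < n)%nat /\ A i w) >=
    sum_list (map (fun I => (-1) ^ (length I + 1) *
                            lam (fun w => forall i, In i I -> A i w))
                  (nonempty_subsets n)).

Definition bet_value (b : form P -> R) (U : form P -> R) (v : R) : Prop :=
  exists s, fsupp b s /\ v = sum_list (map (fun phi => b phi * U phi) s).

Definition represents (pref : (form P -> R) -> (form P -> R) -> Prop)
    (t : form P -> Omega -> Prop) (lam : (Omega -> Prop) -> R) : Prop :=
  forall b b', is_bet b -> is_bet b' ->
    (pref b b' <->
     forall v v', bet_value b (fun phi => lam (t phi)) v ->
                  bet_value b' (fun phi => lam (t phi)) v' -> v >= v').

Definition subjective_model (Sigma : (Omega -> Prop) -> Prop)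
    (t : form P -> Omega -> Prop) (lam : (Omega -> Prop) -> R) : Prop :=
  truth_valuation t /\ is_field Sigma /\ (forall phi, Sigma (t phi)) /\
  appraisal Sigma lam.
End Models.

(** Non-Triviality and Objective Expected Utility give, by the von Neumann-Morgenstern
    argument (calibrating every bet against the mixtures of [T] and [F]), a utility [u] on
    formulas with [u T = 1], [u F = 0] whose expectation represents the preference; in terms of
    [u], Inclusion/Exclusion says exactly that [u] satisfies the inclusion-exclusion
    inequalities, i.e. that [u] is a belief function.  Every subjective model of either kind
    yields such a [u] as [lam o t].

    Conversely a belief function [u] is realised in two ways.  Soundly: worlds are valuations,
    the field consists of the definable sets [t phi], and [lam (t phi) = u phi], which is totally
    monotone because [u] is.  Additively: worlds are satisfiable formulas [w], read as states of
    knowledge, with [t phi = {w | w |- phi}]; this [t] is exact and [/\]-distributive but not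
    symmetric.  The likelihood is the linear extension of [u] to simple functions in the
    indicators of the [t phi].  It is well defined and nonnegative because every such simple
    function decomposes over the regions [t x \ (t e_1 \/ ... \/ t e_k)], whose forced
    likelihoods [excl u x E] are nonnegative by inclusion-exclusion. *)

From Stdlib Require Import Reals Lra Lia List Permutation Classical ClassicalEpsilon
  FunctionalExtensionality PropExtensionality Bool.
Import ListNotations.
Open Scope R_scope.

Definition lsum {A : Type} (s : list A) (g : A -> R) : R := sum_list (map g s).

Section ListSums.
Context {A : Type}.
Implicit Types (s : list A) (f g : A -> R).

Lemma lsum_nil g : lsum [] g = 0.
Proof. reflexivity. Qed.

Lemma lsum_cons x s g : lsum (x :: s) g = g x + lsum s g.
Proof. reflexivity. Qed.

Lemma lsum_app s1 s2 g : lsum (s1 ++ s2) g = lsum s1 g + lsum s2 g.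
Proof. induction s1; unfold lsum in *; simpl; [lra | rewrite IHs1; lra]. Qed.

Lemma lsum_ext s f g : (forall x, In x s -> f x = g x) -> lsum s f = lsum s g.
Proof.
  induction s as [|x s IH]; intros H; [reflexivity|].
  rewrite !lsum_cons, H, IH; auto; [intros; apply H|]; simpl; auto.
Qed.

Lemma lsum_add s f g : lsum s (fun x => f x + g x) = lsum s f + lsum s g.
Proof. induction s; rewrite ?lsum_cons, ?IHs; unfold lsum; simpl; lra. Qed.

Lemma lsum_sub s f g : lsum s (fun x => f x - g x) = lsum s f - lsum s g.
Proof. induction s; rewrite ?lsum_cons, ?IHs; unfold lsum; simpl; lra. Qed.

Lemma lsum_mull s c g : lsum s (fun x => c * g x) = c * lsum s g.
Proof. induction s; rewrite ?lsum_cons, ?IHs; unfold lsum; simpl; lra. Qed.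

Lemma lsum_const s c : lsum s (fun _ => c) = INR (length s) * c.
Proof.
  induction s; rewrite ?lsum_cons, ?IHs; simpl length; rewrite ?S_INR; unfold lsum; simpl; lra.
Qed.

Lemma lsum_map {B : Type} (h : B -> A) (s : list B) g : lsum (map h s) g = lsum s (fun x => g (h x)).
Proof. unfold lsum. now rewrite map_map. Qed.

Lemma lsum_flat_map {B : Type} (h : B -> list A) (s : list B) g :
  lsum (flat_map h s) g = lsum s (fun y => lsum (h y) g).
Proof. induction s; cbn [flat_map]; auto. now rewrite lsum_app, IHs. Qed.

Lemma lsum_nonneg s g : (forall x, In x s -> 0 <= g x) -> 0 <= lsum s g.
Proof.
  induction s as [|x s IH]; intros H; rewrite ?lsum_cons, ?lsum_nil; [lra|].
  assert (0 <= g x) by (apply H; left; auto).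
  assert (0 <= lsum s g) by (apply IH; intros; apply H; right; auto). lra.
Qed.

Lemma lsum_ge_term s g x : (forall y, In y s -> 0 <= g y) -> In x s -> g x <= lsum s g.
Proof.
  induction s as [|y s IH]; intros H Hx; [destruct Hx|]. rewrite lsum_cons.
  destruct Hx as [<-|Hx].
  - pose proof (lsum_nonneg s g (fun z Hz => H z (or_intror Hz))). lra.
  - assert (0 <= g y) by (apply H; left; auto).
    assert (g x <= lsum s g) by (apply IH; auto; intros; apply H; right; auto). lra.
Qed.

Lemma lsum_perm s1 s2 g : Permutation s1 s2 -> lsum s1 g = lsum s2 g.
Proof. induction 1; unfold lsum in *; simpl; lra. Qed.

Lemma lsum_support s1 s2 g : NoDup s1 -> NoDup s2 ->
  (forall x, g x <> 0 -> In x s1) -> (forall x, g x <> 0 -> In x s2) -> lsum s1 g = lsum s2 g.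
Proof.
  intros N1 N2 H1 H2.
  set (nz := fun x => if Req_dec_T (g x) 0 then false else true).
  assert (drop0 : forall s, lsum s g = lsum (filter nz s) g).
  { induction s as [|x s IH]; auto. simpl. unfold nz at 1.
    destruct (Req_dec_T (g x) 0) as [E|E]; rewrite !lsum_cons, IH; [rewrite E; lra | auto]. }
  rewrite (drop0 s1), (drop0 s2). apply lsum_perm, NoDup_Permutation; try apply NoDup_filter; auto.
  intros x. rewrite !filter_In. unfold nz.
  destruct (Req_dec_T (g x) 0); split; intros [? ?]; try discriminate; split; auto.
Qed.

End ListSums.

Lemma lsum_mul {A B : Type} (s : list A) (s' : list B) (f : A -> R) (g : B -> R) :
  lsum s f * lsum s' g = lsum s (fun x => lsum s' (fun y => f x * g y)).
Proof.
  induction s as [|x s IH]; [unfold lsum; simpl; ring|]. rewrite !lsum_cons, <- IH, lsum_mull. ring.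
Qed.

Section Bets.
Context {P : Type}.
Notation fm := (form P).
Implicit Types (b c : fm -> R) (phi psi : fm) (U : fm -> R) (s : list fm).

Definition form_eq_dec (x y : fm) : {x = y} + {x <> y} := excluded_middle_informative (x = y).

Lemma pm_self phi : pm phi phi = 1.
Proof. unfold pm. destruct (excluded_middle_informative (phi = phi)); tauto. Qed.

Lemma pm_other phi psi : psi <> phi -> pm phi psi = 0.
Proof. unfold pm. destruct (excluded_middle_informative (psi = phi)); tauto. Qed.

Lemma pm_range phi psi : 0 <= pm phi psi <= 1.
Proof. unfold pm. destruct (excluded_middle_informative _); lra. Qed.

Lemma lsum_pm s phi g : NoDup s -> In phi s -> lsum s (fun x => pm phi x * g x) = g phi.
Proof.
  induction s as [|x s IH]; intros N H; [destruct H|].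
  apply NoDup_cons_iff in N as [Nx N]. rewrite lsum_cons. destruct H as [<-|H].
  - rewrite pm_self, (lsum_ext _ _ (fun _ => 0)), lsum_const; [lra|].
    intros y Hy. rewrite pm_other; [lra|]. intros ->; auto.
  - rewrite pm_other, IH by (auto; intros ->; auto). lra.
Qed.

Lemma fsupp_pm phi s : NoDup s -> In phi s -> fsupp (pm phi) s.
Proof.
  intros N H. split; auto. intros psi Hp.
  destruct (form_eq_dec psi phi) as [->|Hne]; [auto | now rewrite pm_other in Hp].
Qed.

Lemma pm_bet phi : is_bet (pm phi).
Proof.
  split; [intros; apply pm_range|]. exists [phi].
  split; [apply fsupp_pm; [repeat constructor; intros []|left; auto]|].
  simpl. rewrite pm_self. lra.
Qed.

Lemma fsupp_common b c : (exists s, fsupp b s) -> (exists s, fsupp c s) ->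
  exists s, fsupp b s /\ fsupp c s.
Proof.
  intros [s1 [_ H1]] [s2 [_ H2]]. exists (nodup form_eq_dec (s1 ++ s2)).
  split; split; try apply NoDup_nodup; intros x Hx; apply nodup_In, in_or_app; auto.
Qed.

Lemma bet_fsupp b : is_bet b -> exists s, fsupp b s.
Proof. intros [_ [s [H _]]]; eauto. Qed.

Lemma fsupp_mix a b c s : fsupp b s -> fsupp c s -> fsupp (mix a b c) s.
Proof.
  intros [N Hb] [_ Hc]. split; auto. intros x Hx. unfold mix in Hx.
  destruct (Req_dec_T (b x) 0) as [E|E]; [|auto]. rewrite E in Hx.
  destruct (Req_dec_T (c x) 0) as [E'|E']; [|auto]. rewrite E' in Hx. lra.
Qed.

Lemma bet_total b s : is_bet b -> fsupp b s -> lsum s b = 1.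
Proof.
  intros [_ [s' [[N' H'] E]]] [N H]. rewrite <- E. apply lsum_support; auto.
Qed.

Lemma mix_bet a b c : 0 <= a <= 1 -> is_bet b -> is_bet c -> is_bet (mix a b c).
Proof.
  intros Ha Hb Hc. destruct (fsupp_common b c) as [s [H1 H2]]; try apply bet_fsupp; auto.
  split.
  - intros phi. destruct (proj1 Hb phi), (proj1 Hc phi). unfold mix. split; nra.
  - exists s. split; [apply fsupp_mix; auto|]. fold (lsum s (mix a b c)). unfold mix.
    rewrite lsum_add, !lsum_mull, (bet_total b s), (bet_total c s); auto. lra.
Qed.

Lemma mix_same a b : mix a b b = b.
Proof. apply functional_extensionality; intros; unfold mix; ring. Qed.

Lemma mix_swap a b c : mix a b c = mix (1 - a) c b.
Proof. apply functional_extensionality; intros; unfold mix; ring. Qed.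

Lemma mix_1 b c : mix 1 b c = b.
Proof. apply functional_extensionality; intros; unfold mix; ring. Qed.

Lemma mix_0 b c : mix 0 b c = c.
Proof. apply functional_extensionality; intros; unfold mix; ring. Qed.

Lemma bet_peel b phi s : (forall x, 0 <= b x) -> NoDup (phi :: s) ->
  (forall x, b x <> 0 -> In x (phi :: s)) -> lsum (phi :: s) b = 1 ->
  b = pm phi \/
  b phi < 1 /\ exists b', is_bet b' /\ fsupp b' s /\ b = mix (b phi) (pm phi) b'.
Proof.
  intros Hb N Hs Hsum. apply NoDup_cons_iff in N as [Nphi N]. rewrite lsum_cons in Hsum.
  assert (Hrest : forall x, x <> phi -> b x <> 0 -> In x s)
    by (intros x Hx Hbx; destruct (Hs x Hbx); [congruence|auto]).
  assert (Hle : forall x, In x s -> b x <= 1 - b phi)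
    by (intros x Hx; pose proof (lsum_ge_term s b x (fun y _ => Hb y) Hx); lra).
  destruct (Req_dec_T (b phi) 1) as [E1|E1].
  { left. apply functional_extensionality; intros x.
    destruct (form_eq_dec x phi) as [->|Hx]; [now rewrite pm_self|rewrite pm_other by auto].
    destruct (Req_dec_T (b x) 0) as [|Hbx]; auto. specialize (Hle x (Hrest x Hx Hbx)).
    pose proof (Hb x). lra. }
  assert (Hlt : b phi < 1) by (pose proof (lsum_nonneg s b (fun y _ => Hb y)); lra).
  right. split; auto.
  set (b' := fun x => if form_eq_dec x phi then 0 else b x / (1 - b phi)).
  assert (Hb's : forall x, In x s -> b' x = b x / (1 - b phi))
    by (intros x Hx; unfold b'; destruct (form_eq_dec x phi); [congruence|auto]).
  assert (Hsupp' : fsupp b' s).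
  { split; auto. intros x Hx. unfold b' in Hx. destruct (form_eq_dec x phi); [lra|].
    apply Hrest; auto. intros E; apply Hx; rewrite E; unfold Rdiv; ring. }
  exists b'. split; [|split; auto].
  - split.
    + intros x. unfold b'. destruct (form_eq_dec x phi); [lra|].
      destruct (Req_dec_T (b x) 0) as [E|E]; [rewrite E; unfold Rdiv; rewrite Rmult_0_l; lra|].
      specialize (Hle x (Hrest x n E)). pose proof (Hb x).
      split; [apply Rmult_le_pos; [lra | left; apply Rinv_0_lt_compat; lra]|].
      apply Rmult_le_reg_r with (1 - b phi); [lra|].
      unfold Rdiv. rewrite Rmult_assoc, Rinv_l; lra.
    + exists s. split; auto. fold (lsum s b').
      rewrite (lsum_ext _ _ (fun x => / (1 - b phi) * b x))
        by (intros; rewrite Hb's; auto; unfold Rdiv; ring).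
      rewrite lsum_mull. replace (lsum s b) with (1 - b phi) by lra. field. lra.
  - apply functional_extensionality; intros x. unfold mix, b'.
    destruct (form_eq_dec x phi) as [->|Hx]; [rewrite pm_self; ring|].
    rewrite pm_other by auto. field. lra.
Qed.

Lemma bet_ind (Q : (fm -> R) -> Prop) :
  (forall phi, Q (pm phi)) ->
  (forall a b c, 0 < a < 1 -> is_bet b -> is_bet c -> Q b -> Q c -> Q (mix a b c)) ->
  forall b, is_bet b -> Q b.
Proof.
  intros Hpm Hmix b [Hb [s [[N Hs] Hsum]]]. fold (lsum s b) in Hsum.
  revert b Hb N Hs Hsum. induction s as [|phi s IH]; intros b Hb N Hs Hsum.
  { rewrite lsum_nil in Hsum. lra. }
  destruct (bet_peel b phi s) as [->|[Hlt [b' [Hb' [[N' Hs'] ->]]]]]; auto; [intros; apply Hb|].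
  assert (Qb' : Q b').
  { apply IH; [apply (proj1 Hb') | exact N' | exact Hs' | apply bet_total; [exact Hb' | split; auto]]. }
  destruct (Req_dec_T (b phi) 0) as [E|E]; [now rewrite E, mix_0|].
  apply Hmix; auto using pm_bet. pose proof (Hb phi). lra.
Qed.

(** Junk value [0] when [b] has no finite support. *)
Definition expect U b : R :=
  lsum (epsilon (inhabits []) (fsupp b)) (fun phi => b phi * U phi).

Lemma expect_fsupp U b s : fsupp b s -> expect U b = lsum s (fun phi => b phi * U phi).
Proof.
  intros Hs. unfold expect.
  pose proof (epsilon_spec (inhabits []) (fsupp b) (ex_intro _ s Hs)) as [N H].
  destruct Hs as [N' H']. apply lsum_support; auto; intros x Hx; [apply H|apply H'];
  intros E; apply Hx; rewrite E; ring.
Qed.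

Lemma expect_pm U phi : expect U (pm phi) = U phi.
Proof.
  rewrite (expect_fsupp _ _ [phi]) by (apply fsupp_pm; [repeat constructor; intros []|left; auto]).
  rewrite lsum_cons, lsum_nil, pm_self. lra.
Qed.

Lemma expect_mix U a b c : is_bet b -> is_bet c ->
  expect U (mix a b c) = a * expect U b + (1 - a) * expect U c.
Proof.
  intros Hb Hc. destruct (fsupp_common b c) as [s [H1 H2]]; try apply bet_fsupp; auto.
  rewrite !(expect_fsupp U _ s); auto; [|apply fsupp_mix; auto]. unfold mix.
  rewrite (lsum_ext _ _ (fun x => a * (b x * U x) + (1 - a) * (c x * U x))) by (intros; ring).
  now rewrite lsum_add, !lsum_mull.
Qed.

Lemma bet_value_expect b U v : is_bet b -> (bet_value b U v <-> v = expect U b).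
Proof.
  intros Hb. split.
  - intros [s [Hs ->]]. now rewrite (expect_fsupp _ _ s).
  - intros ->. destruct (bet_fsupp b Hb) as [s Hs]. exists s. split; auto. now apply expect_fsupp.
Qed.

Lemma wbet_cons (p : R * fm) l x : wbet (p :: l) x = fst p * pm (snd p) x + wbet l x.
Proof. reflexivity. Qed.

Lemma wbet_support (l : list (R * fm)) x : wbet l x <> 0 -> In x (map snd l).
Proof.
  induction l as [|p l IH]; intros H; [unfold wbet in H; simpl in H; lra|].
  rewrite wbet_cons in H. simpl. destruct (form_eq_dec x (snd p)) as [->|Hx]; [left; auto|right].
  apply IH. rewrite pm_other in H; auto. lra.
Qed.

Lemma fsupp_wbet (l : list (R * fm)) : fsupp (wbet l) (nodup form_eq_dec (map snd l)).
Proof. split; [apply NoDup_nodup|]. intros x Hx; apply nodup_In, wbet_support; auto. Qed.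

Lemma lsum_wbet U (l : list (R * fm)) s : NoDup s -> (forall x, In x (map snd l) -> In x s) ->
  lsum s (fun phi => wbet l phi * U phi) = lsum l (fun p => fst p * U (snd p)).
Proof.
  induction l as [|p l IH]; intros N S.
  - unfold wbet. simpl. rewrite (lsum_ext _ _ (fun _ => 0)), lsum_const by (intros; lra).
    rewrite lsum_nil. lra.
  - rewrite (lsum_ext _ _ (fun x => fst p * (pm (snd p) x * U x) + wbet l x * U x))
      by (intros; rewrite wbet_cons; ring).
    rewrite lsum_add, lsum_mull, lsum_pm, IH, lsum_cons; auto.
    + intros; apply S; right; auto.
    + apply S; left; auto.
Qed.

Lemma expect_wbet U (l : list (R * fm)) : expect U (wbet l) = lsum l (fun p => fst p * U (snd p)).
Proof.
  rewrite (expect_fsupp _ _ _ (fsupp_wbet l)). apply lsum_wbet; [apply NoDup_nodup|].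
  intros; apply nodup_In; auto.
Qed.

Lemma wbet_bet (l : list (R * fm)) : (forall p, In p l -> 0 <= fst p) -> lsum l fst = 1 ->
  is_bet (wbet l).
Proof.
  intros Hp Hs. split.
  - intros x. enough (0 <= wbet l x <= lsum l fst) by lra. clear Hs.
    induction l as [|p l IH]; [rewrite lsum_nil; unfold wbet; simpl; lra|].
    rewrite wbet_cons, lsum_cons. pose proof (Hp p (or_introl eq_refl)).
    pose proof (pm_range (snd p) x).
    assert (0 <= wbet l x <= lsum l fst) by (apply IH; intros; apply Hp; right; auto). nra.
  - exists (nodup form_eq_dec (map snd l)). split; [apply fsupp_wbet|].
    pose proof (lsum_wbet (fun _ => 1) l _ (NoDup_nodup form_eq_dec _)
                  (fun x Hx => proj2 (nodup_In _ _ _) Hx)) as H.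
    fold (lsum (nodup form_eq_dec (map snd l)) (wbet l)). rewrite <- Hs.
    rewrite (lsum_ext _ _ (fun phi => wbet l phi * 1)), H by (intros; ring).
    apply lsum_ext. intros; ring.
Qed.

End Bets.

Definition eu_rep {P : Type} (pref : (form P -> R) -> (form P -> R) -> Prop) (u : form P -> R) :=
  forall b b', is_bet b -> is_bet b' -> (pref b b' <-> expect u b >= expect u b').

Lemma represents_eu_rep {P Omega : Type} pref (t : form P -> Omega -> Prop) lam :
  represents pref t lam <-> eu_rep pref (fun phi => lam (t phi)).
Proof.
  assert (values : forall b b' (U : form P -> R), is_bet b -> is_bet b' ->
    (forall v v', bet_value b U v -> bet_value b' U v' -> v >= v') <-> expect U b >= expect U b').
  { intros b b' U Hb Hb'. split.
    - intros H. apply H; apply bet_value_expect; auto.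
    - intros H v v' Hv Hv'. apply bet_value_expect in Hv, Hv'; auto. now subst. }
  split; intros H b b' Hb Hb'; specialize (H b b' Hb Hb'); rewrite H; [|symmetry]; now apply values.
Qed.

Lemma convex_comb_around x y z : z < y < x ->
  exists a c, 0 < a < 1 /\ 0 < c < 1 /\ y < a * x + (1 - a) * z /\ c * x + (1 - c) * z < y.
Proof.
  intros H. set (k := (y - z) / (x - z)).
  assert (Hk : k * (x - z) = y - z) by (unfold k; field; lra).
  assert (0 < k < 1).
  { split; apply (Rmult_lt_reg_r (x - z)); lra. }
  exists ((1 + k) / 2), (k / 2). repeat split; try lra; nra.
Qed.

Lemma eu_rep_axioms {P : Type} (PT PF : P) pref (u : form P -> R) : eu_rep pref u ->
  u (Var PT) = 1 -> u (Var PF) = 0 -> (forall phi, 0 <= u phi <= 1) ->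
  NonTriviality PT PF pref /\ ObjectiveEU pref.
Proof.
  intros Hr HT HF Hu. unfold eu_rep in Hr.
  assert (Hpm : forall phi psi, pref (pm phi) (pm psi) <-> u phi >= u psi)
    by (intros; rewrite Hr, !expect_pm by apply pm_bet; tauto).
  split; [split|split; [|split; [|split]]].
  - intros phi. rewrite !Hpm. specialize (Hu phi). lra.
  - split; rewrite Hpm; lra.
  - intros b b' Hb Hb'. rewrite !Hr by auto. lra.
  - intros b b' b'' Hb Hb' Hb''. rewrite !Hr by auto. lra.
  - intros b b' b'' Hb Hb' Hb'' [H1 H2] [H3 H4]. rewrite Hr in H1, H2, H3, H4 by auto.
    destruct (convex_comb_around (expect u b) (expect u b') (expect u b''))
      as (a & c & Ha & Hc & Ha' & Hc');
      [lra|].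
    exists a, c. do 2 (split; auto). unfold spref.
    rewrite !Hr, !expect_mix by (auto; apply mix_bet; auto; lra). lra.
  - intros b b' b'' a Hb Hb' Hb'' Ha.
    rewrite !Hr, !expect_mix by (auto; apply mix_bet; auto; lra).
    split; intros H; [nra|]. apply Rle_ge, (Rmult_le_reg_l a); lra.
Qed.

Section VonNeumannMorgenstern.
Context {P : Type} (PT PF : P) (pref : (form P -> R) -> (form P -> R) -> Prop).
Notation fm := (form P).
Implicit Types (b c : fm -> R).
Context (HNT : NonTriviality PT PF pref) (HEU : ObjectiveEU pref).

Let complete : Complete pref := proj1 HEU.
Let trans : Transitive pref := proj1 (proj2 HEU).
Let arch : Archimedean pref := proj1 (proj2 (proj2 HEU)).
Let indep : Independence pref := proj2 (proj2 (proj2 HEU)).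

Let T := pm (Var PT).
Let F := pm (Var PF).
Let std (a : R) := mix a T F.

Let T_bet : is_bet T := pm_bet _.
Let F_bet : is_bet F := pm_bet _.

Lemma std_bet a : 0 <= a <= 1 -> is_bet (std a).
Proof. intros; apply mix_bet; auto. Qed.

Lemma std_mix a x y : mix a (std x) (std y) = std (a * x + (1 - a) * y).
Proof. apply functional_extensionality; intros; unfold std, mix; ring. Qed.

Lemma std_0 : std 0 = F.
Proof. apply mix_0. Qed.

Lemma std_1 : std 1 = T.
Proof. apply mix_1. Qed.

Lemma pref_refl b : is_bet b -> pref b b.
Proof. intros Hb. destruct (complete b b Hb Hb); auto. Qed.

Lemma indep_r a b b' c : is_bet b -> is_bet b' -> is_bet c -> 0 < a < 1 ->
  (pref b b' <-> pref (mix a c b) (mix a c b')).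
Proof. intros. rewrite (mix_swap a c b), (mix_swap a c b'). apply indep; auto. lra. Qed.

Lemma std_strict_T a : 0 <= a < 1 -> spref pref T (std a).
Proof.
  intros Ha. destruct (Req_dec_T a 0) as [->|Hne]; [rewrite std_0; apply HNT|].
  destruct (proj2 HNT) as [H1 H2].
  assert (E : std a = mix (1 - a) F T) by (unfold std; rewrite mix_swap; f_equal; ring).
  assert (Ha' : 0 < 1 - a < 1) by lra.
  pose proof (indep T F T (1 - a) T_bet F_bet T_bet Ha') as HH.
  pose proof (indep F T T (1 - a) F_bet T_bet T_bet Ha') as HH'.
  rewrite mix_same, <- E in HH, HH'.
  split; [now apply HH|]. intros H. now apply H2, HH'.
Qed.

Lemma std_strict a a' : 0 <= a' < a -> a <= 1 -> spref pref (std a) (std a').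
Proof.
  intros H1 H2. destruct (Req_dec_T a 1) as [->|Hne]; [rewrite std_1; apply std_strict_T; lra|].
  set (k := a' / a).
  assert (Hk : 0 <= k < 1).
  { unfold k. split; [apply Rmult_le_pos; [lra|left; apply Rinv_0_lt_compat; lra]|].
    apply (Rmult_lt_reg_r a); [lra|]. unfold Rdiv; rewrite Rmult_assoc, Rinv_l; lra. }
  destruct (std_strict_T k Hk) as [S1 S2].
  assert (E : std a' = mix a (std k) F)
    by (rewrite <- std_0, std_mix; f_equal; unfold k; field; lra).
  assert (Ea : std a = mix a T F) by reflexivity.
  assert (Bk : is_bet (std k)) by (apply std_bet; lra).
  assert (Ha : 0 < a < 1) by lra.
  pose proof (indep T (std k) F a T_bet Bk F_bet Ha) as HH.
  pose proof (indep (std k) T F a Bk T_bet F_bet Ha) as HH'.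
  rewrite <- E, <- Ea in HH, HH'.
  split; [now apply HH|]. intros H. now apply S2, HH'.
Qed.

Lemma std_le a a' : 0 <= a' <= a -> a <= 1 -> pref (std a) (std a').
Proof.
  intros H1 H2. destruct (Req_dec_T a a') as [->|Hne]; [apply pref_refl, std_bet; lra|].
  apply std_strict; lra.
Qed.

Lemma bet_between_T_F b : is_bet b -> pref T b /\ pref b F.
Proof.
  revert b. apply bet_ind; [exact (proj1 HNT)|].
  intros a b c Ha Hb Hc [Tb bF] [Tc cF].
  assert (Bm : is_bet (mix a b c)) by (apply mix_bet; auto; lra).
  split.
  - apply trans with (mix a T c); auto; [apply mix_bet; auto; lra| |now apply indep].
    rewrite <- (mix_same a T) at 1. now apply indep_r.
  - apply trans with (mix a F c); auto; [apply mix_bet; auto; lra|now apply indep|].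
    rewrite <- (mix_same a F) at 2. now apply indep_r.
Qed.

Definition indiff b c := pref b c /\ pref c b.

Lemma indiff_trans b c d : is_bet b -> is_bet c -> is_bet d -> indiff b c -> indiff c d -> indiff b d.
Proof. intros ? ? ? [] []; split; eapply trans; eauto. Qed.

Section Calibration.
Context (b : fm -> R) (Hb : is_bet b) (nFb : ~ pref F b) (nbT : ~ pref b T) (s : R).
Let below (a : R) := 0 <= a <= 1 /\ pref b (std a).
Hypothesis (s_lub : is_lub below s).

Lemma lub_range : 0 <= s <= 1.
Proof.
  destruct s_lub as [Hub Hlub]. split.
  - apply Hub. split; [lra|]. rewrite std_0. apply bet_between_T_F, Hb.
  - apply Hlub. intros x [Hx _]. lra.
Qed.

(** If [std s] were strictly better than [b], the Archimedean axiom would push a mixture of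
    [std s] and [F], that is some [std (a * s)] with [a < 1], below [b]; then [a * s] would be
    an upper bound of [below]. *)
Lemma pref_b_lub : pref b (std s).
Proof.
  destruct s_lub as [_ Hlub]. pose proof lub_range as Hs.
  assert (Bs : is_bet (std s)) by (apply std_bet; lra).
  apply NNPP. intros H.
  assert (H' : pref (std s) b) by (destruct (complete b (std s)); auto; contradiction).
  assert (sp : 0 < s).
  { destruct (Req_dec_T s 0) as [E|E]; [|lra]. exfalso. apply H. rewrite E, std_0.
    apply bet_between_T_F, Hb. }
  destruct (arch (std s) b F Bs Hb F_bet) as [a [c [Ha [_ [[_ Hx] _]]]]];
    [split; auto|split; auto; apply bet_between_T_F, Hb|].
  rewrite <- std_0, std_mix, Rmult_0_r, Rplus_0_r in Hx.
  assert (Hle : s <= a * s).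
  { apply Hlub. intros x [Hx1 Hx2]. destruct (Rle_dec x (a * s)) as [|Hlt]; auto. exfalso.
    apply Hx, trans with (std x); auto; [apply std_bet; lra|apply std_bet; nra|apply std_le; nra]. }
  nra.
Qed.

(** Symmetrically, if [b] were strictly better than [std s], some [std (c + (1 - c) * s)] with
    [c > 0] would still be below [b]. *)
Lemma pref_lub_b : pref (std s) b.
Proof.
  destruct s_lub as [Hub _]. pose proof lub_range as Hs.
  assert (Bs : is_bet (std s)) by (apply std_bet; lra).
  apply NNPP. intros H.
  assert (H' : pref b (std s)) by (destruct (complete b (std s)); auto; contradiction).
  assert (s1 : s < 1).
  { destruct (Req_dec_T s 1) as [E|E]; [|lra]. exfalso. apply nbT. now rewrite <- std_1, <- E. }
  destruct (arch T b (std s) T_bet Hb Bs) as [a [c [_ [Hc [_ [Hx _]]]]]];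
    [split; auto; apply bet_between_T_F, Hb|split; auto|].
  rewrite <- std_1, std_mix, Rmult_1_r in Hx.
  assert (c + (1 - c) * s <= s) by (apply Hub; split; [split; nra|apply Hx]). nra.
Qed.

End Calibration.

Lemma std_calibrates b : is_bet b -> exists a, 0 <= a <= 1 /\ indiff b (std a).
Proof.
  intros Hb.
  destruct (classic (pref F b)) as [Fb|nFb].
  { exists 0. split; [lra|]. rewrite std_0. split; auto. apply bet_between_T_F, Hb. }
  destruct (classic (pref b T)) as [bT|nbT].
  { exists 1. split; [lra|]. rewrite std_1. split; auto. apply bet_between_T_F, Hb. }
  set (below := fun a => 0 <= a <= 1 /\ pref b (std a)).
  assert (B0 : below 0) by (split; [lra|]; rewrite std_0; apply bet_between_T_F, Hb).
  destruct (completeness below) as [s Hs]; [exists 1; intros x [Hx _]; lra|eauto|].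
  exists s. split; [apply (lub_range b Hb s Hs)|].
  split; [eapply pref_b_lub|eapply pref_lub_b]; eauto.
Qed.

Definition calib b : R := epsilon (inhabits 0) (fun a => 0 <= a <= 1 /\ indiff b (std a)).

Lemma calib_spec b : is_bet b -> 0 <= calib b <= 1 /\ indiff b (std (calib b)).
Proof. intros Hb. unfold calib. apply epsilon_spec, std_calibrates, Hb. Qed.

Lemma calib_unique b a : is_bet b -> 0 <= a <= 1 -> indiff b (std a) -> calib b = a.
Proof.
  intros Hb Ha [H1 H2]. destruct (calib_spec b Hb) as [Hc [H3 H4]].
  destruct (Rtotal_order (calib b) a) as [Hl|[He|Hl]]; auto; exfalso.
  - destruct (std_strict a (calib b)) as [_ S]; try lra.
    apply S, trans with b; auto; apply std_bet; lra.
  - destruct (std_strict (calib b) a) as [_ S]; try lra.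
    apply S, trans with b; auto; apply std_bet; lra.
Qed.

Lemma calib_pref b b' : is_bet b -> is_bet b' -> (pref b b' <-> calib b >= calib b').
Proof.
  intros Hb Hb'. destruct (calib_spec b Hb) as [U1 [I1 I2]].
  destruct (calib_spec b' Hb') as [U2 [I3 I4]].
  assert (B1 : is_bet (std (calib b))) by (apply std_bet; lra).
  assert (B2 : is_bet (std (calib b'))) by (apply std_bet; lra).
  split.
  - intros H. apply Rnot_lt_ge. intros Hl.
    destruct (std_strict (calib b') (calib b)) as [_ S]; try lra.
    apply S, trans with b; auto. apply trans with b'; auto.
  - intros H. apply trans with (std (calib b)); auto. apply trans with (std (calib b')); auto.
    apply std_le; lra.
Qed.

Lemma calib_mix a b c : 0 < a < 1 -> is_bet b -> is_bet c ->
  calib (mix a b c) = a * calib b + (1 - a) * calib c.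
Proof.
  intros Ha Hb Hc. destruct (calib_spec b Hb) as [U1 I1]. destruct (calib_spec c Hc) as [U2 I2].
  assert (B1 : is_bet (std (calib b))) by (apply std_bet; lra).
  assert (B2 : is_bet (std (calib c))) by (apply std_bet; lra).
  apply calib_unique; [apply mix_bet; auto; lra|nra|]. rewrite <- std_mix.
  apply indiff_trans with (mix a (std (calib b)) c); try (apply mix_bet; auto; lra).
  - split; apply indep; try tauto; apply I1.
  - split; apply indep_r; try tauto; apply I2.
Qed.

Theorem vNM_utility : exists u : fm -> R, eu_rep pref u /\
  u (Var PT) = 1 /\ u (Var PF) = 0 /\ (forall phi, 0 <= u phi <= 1).
Proof.
  exists (fun phi => calib (pm phi)).
  assert (Hexp : forall b, is_bet b -> calib b = expect (fun phi => calib (pm phi)) b).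
  { apply bet_ind; [intros; now rewrite expect_pm|].
    intros a b c Ha Hb Hc E1 E2. now rewrite calib_mix, expect_mix, E1, E2. }
  split; [|split; [|split]].
  - intros b b' Hb Hb'. rewrite <- !Hexp by auto. now apply calib_pref.
  - apply calib_unique; [apply T_bet|lra|]. rewrite std_1. split; apply pref_refl, T_bet.
  - apply calib_unique; [apply F_bet|lra|]. rewrite std_0. split; apply pref_refl, F_bet.
  - intros phi. apply calib_spec, pm_bet.
Qed.

End VonNeumannMorgenstern.

Section InclusionExclusionUtility.
Context {P : Type} (PT PF : P).
Notation fm := (form P).
Implicit Types (u : fm -> R) (phi psi x y : fm).

Definition ie_ineq u : Prop :=
  forall (n : nat) (phi : nat -> fm) psi,
    (forall i, (i < n)%nat -> deduces PT PF (phi i) psi) ->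
    u psi + lsum (even_subsets n) (fun I => u (bigand PT phi I)) >=
    lsum (odd_subsets n) (fun I => u (bigand PT phi I)).

(** Both bets of the Inclusion/Exclusion axiom have this form. *)
Definition ubet (m : R) (l : list fm) : fm -> R :=
  wbet (map (fun x => (1 / m, x)) l ++ [(1 - INR (length l) / m, Var PF)]).

Lemma ubet_bet m l : INR (length l) <= m -> 0 < m -> is_bet (ubet m l).
Proof.
  intros Hl Hm. assert (0 < 1 / m) by (apply Rdiv_lt_0_compat; lra).
  apply wbet_bet.
  - intros p Hp. apply in_app_or in Hp as [Hp|[<-|[]]].
    + apply in_map_iff in Hp as [x [<- _]]. simpl; lra.
    + simpl. enough (INR (length l) / m <= 1) by lra.
      apply Rmult_le_reg_r with m; auto. unfold Rdiv; rewrite Rmult_assoc, Rinv_l; lra.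
  - rewrite lsum_app, lsum_map, lsum_cons, lsum_nil. cbn [fst]. rewrite lsum_const. field. lra.
Qed.

Lemma expect_ubet u m l :
  expect u (ubet m l) = 1 / m * lsum l u + (1 - INR (length l) / m) * u (Var PF).
Proof.
  unfold ubet. rewrite expect_wbet, lsum_app, lsum_map, lsum_cons, lsum_nil. cbn [fst snd].
  rewrite lsum_mull. ring.
Qed.

Lemma InclusionExclusion_iff pref u : eu_rep pref u -> u (Var PF) = 0 ->
  (InclusionExclusion PT PF pref <-> ie_ineq u).
Proof.
  intros Hr HF. unfold eu_rep in Hr.
  enough (key : forall n (phi : nat -> fm) psi, let Ev := even_subsets n in let Od := odd_subsets n in
    let m := INR (Nat.max (length Ev + 1) (length Od)) in
    pref (ubet m (psi :: map (bigand PT phi) Ev)) (ubet m (map (bigand PT phi) Od)) <->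
    u psi + lsum Ev (fun I => u (bigand PT phi I)) >= lsum Od (fun I => u (bigand PT phi I))).
  { assert (Eleft : forall m (phi : nat -> fm) psi L,
      wbet ((1 / m, psi) :: map (fun I => (1 / m, bigand PT phi I)) L
            ++ [(1 - INR (length L + 1) / m, Var PF)]) = ubet m (psi :: map (bigand PT phi) L))
      by (intros; unfold ubet; cbn [map length]; now rewrite map_map, length_map, Nat.add_1_r).
    assert (Eright : forall m (phi : nat -> fm) L,
      wbet (map (fun I => (1 / m, bigand PT phi I)) L ++ [(1 - INR (length L) / m, Var PF)])
      = ubet m (map (bigand PT phi) L))
      by (intros; unfold ubet; now rewrite map_map, length_map).
    unfold InclusionExclusion. setoid_rewrite Eleft. setoid_rewrite Eright.
    split; intros H n phi psi Hd; apply key; auto. }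
  intros n phi psi Ev Od m.
  assert (HE : INR (length Ev + 1) <= m) by apply le_INR, Nat.le_max_l.
  assert (HO : INR (length Od) <= m) by apply le_INR, Nat.le_max_r.
  rewrite plus_INR in HE. simpl INR in HE. pose proof (pos_INR (length Ev)).
  assert (Hm : 0 < 1 / m) by (apply Rdiv_lt_0_compat; lra).
  rewrite Hr by (apply ubet_bet; simpl length; rewrite ?length_map, ?S_INR; lra).
  rewrite !expect_ubet, HF, lsum_cons, !lsum_map.
  split; intros Hge; [|nra]. apply Rle_ge, (Rmult_le_reg_l (1 / m)); lra.
Qed.

End InclusionExclusionUtility.

Lemma pow_neg1 n : (-1) ^ n = if Nat.even n then 1 else -1.
Proof.
  induction n; [reflexivity|]. change ((-1) ^ S n) with (-1 * (-1) ^ n).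
  rewrite IHn, Nat.even_succ. unfold Nat.odd. destruct (Nat.even n); simpl; ring.
Qed.

Lemma lsum_if {A : Type} (c : bool) (x : A) l g :
  lsum (if c then x :: l else l) g = (if c then g x else 0) + lsum l g.
Proof. destruct c; [apply lsum_cons|simpl; ring]. Qed.

Lemma lsum_sign (L : list (list nat)) (g : list nat -> R) :
  lsum L (fun I => (-1) ^ length I * g I) =
  lsum (filter (fun I => Nat.eqb (length I) 0) L) g +
  lsum (filter (fun I => Nat.ltb 0 (length I) && Nat.even (length I)) L) g -
  lsum (filter (fun I => Nat.odd (length I)) L) g.
Proof.
  induction L as [|I L IH]; [unfold lsum; simpl; ring|].
  cbn [filter]. rewrite lsum_cons, !lsum_if, IH, pow_neg1.
  unfold Nat.odd. destruct (length I) as [|k]; [simpl; ring|].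
  cbn [Nat.eqb Nat.ltb Nat.leb andb]. destruct (Nat.even (S k)); cbn [negb]; ring.
Qed.

Lemma lsum_sign_nonempty (L : list (list nat)) (g : list nat -> R) :
  lsum (filter (fun I => Nat.ltb 0 (length I)) L) (fun I => (-1) ^ (length I + 1) * g I) =
  lsum (filter (fun I => Nat.odd (length I)) L) g -
  lsum (filter (fun I => Nat.ltb 0 (length I) && Nat.even (length I)) L) g.
Proof.
  induction L as [|I L IH]; [unfold lsum; simpl; ring|].
  cbn [filter]. rewrite !lsum_if, IH, pow_neg1, Nat.add_1_r, Nat.even_succ.
  unfold Nat.odd. destruct (length I) as [|k]; [simpl; ring|].
  cbn [Nat.ltb Nat.leb andb]. destruct (Nat.even (S k)); cbn [negb]; ring.
Qed.

Lemma subsets_length0 l : filter (fun I => Nat.eqb (length I) 0) (subsets l) = [[]].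
Proof.
  induction l as [|x l IH]; auto. cbn [subsets]. rewrite filter_app, IH.
  enough (E : forall L, filter (fun I => Nat.eqb (length I) 0) (map (cons x) L) = [])
    by now rewrite E.
  induction L; simpl; auto.
Qed.

Lemma in_subsets_incl l I : In I (subsets l) -> forall i, In i I -> In i l.
Proof.
  revert I; induction l as [|x l IH]; simpl; intros I H i Hi.
  - destruct H as [<-|[]]; destruct Hi.
  - apply in_app_or in H as [H|H]; [right; eapply IH; eauto|].
    apply in_map_iff in H as [J [<- HJ]].
    destruct Hi as [->|Hi]; [left; auto|right; eapply IH; eauto].
Qed.

Lemma in_even_subsets n I : In I (even_subsets n) -> In I (subsets (seq 0 n)) /\ (0 < length I)%nat.
Proof.
  unfold even_subsets. rewrite filter_In, andb_true_iff, Nat.ltb_lt. tauto.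
Qed.

Lemma in_odd_subsets n I : In I (odd_subsets n) -> In I (subsets (seq 0 n)) /\ (0 < length I)%nat.
Proof.
  unfold odd_subsets. rewrite filter_In. intros [H1 H2]. split; auto.
  destruct I; simpl in *; [discriminate|lia].
Qed.

Lemma map_nth_seq {A : Type} (E : list A) d : map (fun i => nth i E d) (seq 0 (length E)) = E.
Proof.
  induction E as [|a E IH]; simpl; auto. f_equal. now rewrite <- seq_shift, map_map.
Qed.

Lemma forallb_andb_const (c : bool) (f : nat -> bool) I :
  I <> [] -> forallb (fun i => c && f i) I = c && forallb f I.
Proof.
  induction I as [|i I IH]; intros H; [contradiction|]. simpl. destruct I as [|j I'].
  - simpl. now rewrite !andb_true_r.
  - rewrite IH by discriminate. destruct c; simpl; auto.
Qed.

Section Formulas.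
Context {P : Type} (PT PF : P).
Notation fm := (form P).

Lemma equiv_of_feval (x y : fm) :
  (forall v, v PT = true -> v PF = false -> feval v x = feval v y) -> equiv PT PF x y.
Proof. intros H; split; intros v H1 H2 H3; rewrite <- H3; [symmetry|]; auto. Qed.

Lemma deduces_refl (x : fm) : deduces PT PF x x.
Proof. intros v _ _ h; auto. Qed.

Lemma deduces_and (w x y : fm) :
  deduces PT PF w (And x y) <-> deduces PT PF w x /\ deduces PT PF w y.
Proof.
  split.
  - intros H; split; intros v h1 h2 h3; specialize (H v h1 h2 h3); simpl in H;
      apply andb_true_iff in H; tauto.
  - intros [H1 H2] v h1 h2 h3; simpl; apply andb_true_iff; auto.
Qed.

Lemma feval_bigand v (phi : nat -> fm) I :
  v PT = true -> feval v (bigand PT phi I) = forallb (fun i => feval v (phi i)) I.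
Proof.
  intros HT. induction I as [|i I IH]; simpl; auto.
  destruct I as [|j I']; simpl; [now rewrite andb_true_r|]. simpl in IH. now rewrite IH.
Qed.

Definition conj_from (x : fm) (e : nat -> fm) (I : list nat) : fm :=
  fold_left (fun acc i => And acc (e i)) I x.

Lemma feval_conj_from v x e I :
  feval v (conj_from x e I) = feval v x && forallb (fun i => feval v (e i)) I.
Proof.
  revert x; induction I as [|i I IH]; intros x; simpl.
  - now rewrite andb_true_r.
  - unfold conj_from in *. simpl. rewrite IH. simpl. now rewrite andb_assoc.
Qed.

Definition sat (x : fm) := exists v, v PT = true /\ v PF = false /\ feval v x = true.

Definition u_exact (u : fm -> R) := forall x y, equiv PT PF x y -> u x = u y.

End Formulas.

Section Exclusion.
Context {P : Type} (PT PF : P).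
Notation fm := (form P).
Context (u : fm -> R) (Hex : u_exact PT PF u).

(** [excl x E] is what inclusion/exclusion forces the likelihood of [t x] minus the union of
    the [t e], [e] in [E], to be. *)
Fixpoint excl (x : fm) (E : list fm) : R :=
  match E with
  | [] => u x
  | y :: E' => excl x E' - excl (And x y) E'
  end.

Lemma excl_equiv E : forall x x', equiv PT PF x x' -> excl x E = excl x' E.
Proof.
  induction E as [|y E IH]; intros x x' H; simpl; auto.
  rewrite (IH x x' H), (IH (And x y) (And x' y)); auto.
  destruct H as [H1 H2]. split; intros v h1 h2 h3; simpl in *;
    apply andb_true_iff in h3 as [h3 h4]; apply andb_true_iff; auto.
Qed.

Lemma excl_subsets (e : nat -> fm) l : forall x,
  excl x (map e l) = lsum (subsets l) (fun I => (-1) ^ length I * u (conj_from x e I)).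
Proof.
  induction l as [|i l IH]; intros x; simpl; [unfold lsum; simpl; ring|].
  rewrite lsum_app, lsum_map, !IH.
  rewrite (lsum_ext _ (fun I => (-1) ^ length (i :: I) * u (conj_from x e (i :: I)))
                      (fun I => -1 * ((-1) ^ length I * u (conj_from (And x (e i)) e I))))
    by (intros; simpl; ring).
  rewrite lsum_mull. ring.
Qed.

Lemma excl_expand (e : nat -> fm) n x :
  excl x (map e (seq 0 n)) = u x + lsum (even_subsets n) (fun I => u (conj_from x e I))
                                 - lsum (odd_subsets n) (fun I => u (conj_from x e I)).
Proof.
  rewrite excl_subsets, lsum_sign, subsets_length0. unfold even_subsets, odd_subsets.
  rewrite lsum_cons, lsum_nil. simpl. ring.
Qed.

Lemma ie_of_excl_nonneg : (forall x E, excl x E >= 0) -> ie_ineq PT PF u.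
Proof.
  intros Hb n phi psi Hd. pose proof (Hb psi (map phi (seq 0 n))) as H. rewrite excl_expand in H.
  assert (Hc : forall I, In I (subsets (seq 0 n)) /\ (0 < length I)%nat ->
                 u (conj_from psi phi I) = u (bigand PT phi I)).
  { intros I [HI HL]. apply Hex, equiv_of_feval. intros v h1 h2.
    rewrite feval_conj_from, feval_bigand by auto.
    destruct (forallb (fun i => feval v (phi i)) I) eqn:Ef; [|apply andb_false_r].
    rewrite andb_true_r. destruct I as [|i I]; [simpl in HL; lia|].
    simpl in Ef. apply andb_true_iff in Ef as [Ef _]. apply (Hd i); auto.
    apply in_seq with (start := 0%nat). eapply in_subsets_incl; eauto. left; auto. }
  rewrite (lsum_ext (even_subsets n) _ (fun I => u (bigand PT phi I))) in H
    by (intros; apply Hc, in_even_subsets; auto).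
  rewrite (lsum_ext (odd_subsets n) _ (fun I => u (bigand PT phi I))) in H
    by (intros; apply Hc, in_odd_subsets; auto).
  lra.
Qed.

(** Apply inclusion/exclusion to the formulas [x /\ e_i], which all imply [x]. *)
Lemma excl_nonneg : ie_ineq PT PF u -> forall x E, excl x E >= 0.
Proof.
  intros HI x E. set (e := fun i => nth i E (Var PT)).
  rewrite <- (map_nth_seq E (Var PT)). fold e. rewrite excl_expand.
  pose proof (HI (length E) (fun i => And x (e i)) x) as H.
  assert (Hd : forall i, (i < length E)%nat -> deduces PT PF (And x (e i)) x).
  { intros i _ v h1 h2 h3. simpl in h3. apply andb_true_iff in h3; tauto. }
  specialize (H Hd).
  assert (Hc : forall I, (0 < length I)%nat ->
                 u (conj_from x e I) = u (bigand PT (fun i => And x (e i)) I)).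
  { intros I HL. apply Hex, equiv_of_feval. intros v h1 h2.
    rewrite feval_conj_from, feval_bigand by auto.
    simpl. rewrite forallb_andb_const; auto. destruct I; simpl in HL; [lia|discriminate]. }
  rewrite (lsum_ext (even_subsets _) _ (fun I => u (bigand PT (fun i => And x (e i)) I)))
    by (intros I HH; apply in_even_subsets in HH as [? ?]; auto).
  rewrite (lsum_ext (odd_subsets _) _ (fun I => u (bigand PT (fun i => And x (e i)) I)))
    by (intros I HH; apply in_odd_subsets in HH as [? ?]; auto).
  lra.
Qed.

Lemma excl_unsat (HF : u (Var PF) = 0) E : forall x, ~ sat PT PF x -> excl x E = 0.
Proof.
  induction E as [|y E IH]; intros x Hx; simpl.
  - rewrite <- HF. apply Hex. split; intros v h1 h2 h3.
    + exfalso; apply Hx; exists v; auto.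
    + simpl in h3; congruence.
  - rewrite !IH; [ring| |auto]. intros [v [h1 [h2 h3]]]. apply Hx. exists v. simpl in h3.
    apply andb_true_iff in h3. tauto.
Qed.

Lemma excl_covered E : forall x y, In y E -> deduces PT PF x y -> excl x E = 0.
Proof.
  induction E as [|y' E IH]; intros x y Hy Hd; [destruct Hy|]. simpl.
  destruct Hy as [->|Hy].
  - rewrite (excl_equiv E x (And x y)); [ring|]. split; intros v h1 h2 h3; simpl in *.
    + rewrite h3, (Hd v); auto.
    + apply andb_true_iff in h3; tauto.
  - rewrite (IH x y Hy Hd), (IH (And x y') y Hy); [ring|].
    intros v h1 h2 h3. simpl in h3. apply andb_true_iff in h3 as [h3 _]. auto.
Qed.

End Exclusion.

Section Belief.
Context {P : Type} (PT PF : P).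
Notation fm := (form P).
Implicit Types (u : fm -> R) (x y : fm).

Definition belief u : Prop := u (Var PT) = 1 /\ u (Var PF) = 0 /\ ie_ineq PT PF u.

Lemma ie_monotone u : ie_ineq PT PF u -> forall x y, deduces PT PF x y -> u x <= u y.
Proof.
  intros HI x y Hxy. pose proof (HI 1%nat (fun _ => x) y (fun _ _ => Hxy)) as H.
  change (even_subsets 1) with (@nil (list nat)) in H.
  change (odd_subsets 1) with [[0%nat]] in H.
  rewrite lsum_nil, lsum_cons, lsum_nil in H. simpl in H. lra.
Qed.

Lemma ie_exact u : ie_ineq PT PF u -> u_exact PT PF u.
Proof. intros HI x y [H1 H2]. apply Rle_antisym; apply ie_monotone; auto. Qed.

Lemma belief_range u : belief u -> forall x, 0 <= u x <= 1.
Proof.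
  intros [HT [HF HI]] x. rewrite <- HT, <- HF.
  split; apply ie_monotone; auto; intros v h1 h2 h3; simpl in *; congruence.
Qed.

Lemma axioms_iff_belief_rep pref :
  NonTriviality PT PF pref /\ ObjectiveEU pref /\ InclusionExclusion PT PF pref <->
  exists u, belief u /\ eu_rep pref u.
Proof.
  split.
  - intros [HNT [HEU HIE]]. destruct (vNM_utility PT PF pref HNT HEU) as [u [Hr [HT [HF _]]]].
    exists u. split; [split; [|split]|]; auto. now apply (InclusionExclusion_iff PT PF pref u Hr HF).
  - intros [u [[HT [HF HI]] Hr]].
    destruct (eu_rep_axioms PT PF pref u Hr HT HF) as [HNT HEU]; [apply belief_range; split; auto|].
    split; [|split]; auto. now apply (InclusionExclusion_iff PT PF pref u Hr HF).
Qed.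

End Belief.

Lemma set_ext {X : Type} (A B : X -> Prop) : (forall w, A w <-> B w) -> A = B.
Proof.
  intros H. apply functional_extensionality; intros w. apply propositional_extensionality, H.
Qed.

Section AdditiveModel.
Context {P : Type} (PT PF : P).
Notation fm := (form P).
Context (u : fm -> R) (Hbel : belief PT PF u).

Let HT : u (Var PT) = 1 := proj1 Hbel.
Let HF : u (Var PF) = 0 := proj1 (proj2 Hbel).
Let Hex : u_exact PT PF u := ie_exact PT PF u (proj2 (proj2 Hbel)).
Let Hexcl : forall x E, excl u x E >= 0 := excl_nonneg PT PF u Hex (proj2 (proj2 Hbel)).

Definition sfun : Type := R * list (R * fm).

Definition proves01 (w phi : fm) : R :=
  if excluded_middle_informative (deduces PT PF w phi) then 1 else 0.

Definition sf_eval (r : sfun) (w : fm) : R :=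
  fst r + lsum (snd r) (fun p => fst p * proves01 w (snd p)).

Definition sf_value (r : sfun) : R :=
  fst r + lsum (snd r) (fun p => fst p * u (snd p)).

(** The value of [(a, ts)] restricted to the region of [excl c E]. *)
Definition sf_region_value (c : fm) (E : list fm) (a : R) (ts : list (R * fm)) : R :=
  a * excl u c E + lsum ts (fun p => fst p * excl u (And c (snd p)) E).

Lemma sf_region_value_split c E a c1 p1 ts :
  sf_region_value c E a ((c1, p1) :: ts) =
  sf_region_value (And c p1) E (a + c1) ts + sf_region_value c (p1 :: E) a ts.
Proof.
  unfold sf_region_value. rewrite lsum_cons. cbn [fst snd excl].
  rewrite (lsum_ext ts
    (fun p => fst p * (excl u (And c (snd p)) E - excl u (And (And c (snd p)) p1) E))
    (fun p => fst p * excl u (And c (snd p)) E - fst p * excl u (And (And c p1) (snd p)) E)).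
  { rewrite lsum_sub. ring. }
  intros p _. rewrite (excl_equiv PT PF u Hex E (And (And c (snd p)) p1) (And (And c p1) (snd p))).
  { ring. }
  apply equiv_of_feval. intros v _ _. simpl.
  now destruct (feval v c), (feval v (snd p)), (feval v p1).
Qed.

Lemma sf_region_value_nonneg ts : forall c E a,
  (forall w, sat PT PF w -> deduces PT PF w c -> (forall e, In e E -> ~ deduces PT PF w e) ->
     sf_eval (a, ts) w >= 0) ->
  sf_region_value c E a ts >= 0.
Proof.
  induction ts as [|[c1 p1] ts IH]; intros c E a H.
  - unfold sf_region_value. rewrite lsum_nil. unfold sf_eval in H; simpl in H.
    destruct (Rle_dec 0 a) as [Ha|Ha]; [specialize (Hexcl c E); nra|].
    destruct (classic (sat PT PF c)) as [Sc|Sc]; [|rewrite (excl_unsat PT PF u Hex HF); auto; lra].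
    destruct (classic (exists e, In e E /\ deduces PT PF c e)) as [[e [He Hce]]|NE].
    + rewrite (excl_covered PT PF u Hex E c e); auto. lra.
    + exfalso. specialize (H c Sc (deduces_refl PT PF c)). rewrite lsum_nil in H.
      enough (a + 0 >= 0) by lra. apply H. intros e He Hce. apply NE. eauto.
  - rewrite sf_region_value_split.
    enough (sf_region_value (And c p1) E (a + c1) ts >= 0 /\ sf_region_value c (p1 :: E) a ts >= 0)
      by lra.
    split; apply IH; intros w S1 S2 S3.
    + apply deduces_and in S2 as [S2 S4]. specialize (H w S1 S2 S3).
      unfold sf_eval in *; simpl in *. rewrite lsum_cons in H. unfold proves01 at 1 in H.
      destruct (excluded_middle_informative _); [|contradiction]. simpl in H. lra.
    + specialize (H w S1 S2 (fun e He => S3 e (or_intror He))).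
      unfold sf_eval in *; simpl in *. rewrite lsum_cons in H. unfold proves01 at 1 in H.
      destruct (excluded_middle_informative _) as [d|d]; [exfalso; apply (S3 p1); auto; left; auto|].
      simpl in H. lra.
Qed.

Lemma sf_value_nonneg r : (forall w, sat PT PF w -> sf_eval r w >= 0) -> sf_value r >= 0.
Proof.
  intros H. destruct r as [a ts].
  replace (sf_value (a, ts)) with (sf_region_value (Var PT) [] a ts).
  { apply sf_region_value_nonneg. intros w S1 _ _. auto. }
  unfold sf_region_value, sf_value. simpl. rewrite HT. f_equal; [ring|]. apply lsum_ext.
  intros p _. f_equal. apply Hex, equiv_of_feval. intros v h1 _. simpl. now rewrite h1.
Qed.

Definition sf_opp (r : sfun) : sfun := (- fst r, map (fun p => (- fst p, snd p)) (snd r)).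
Definition sf_add (r r' : sfun) : sfun := (fst r + fst r', snd r ++ snd r').
Definition sf_mul (r r' : sfun) : sfun :=
  (fst r * fst r',
   map (fun p => (fst r' * fst p, snd p)) (snd r) ++ map (fun q => (fst r * fst q, snd q)) (snd r') ++
   flat_map (fun p => map (fun q => (fst p * fst q, And (snd p) (snd q))) (snd r')) (snd r)).

Lemma sf_eval_opp r w : sf_eval (sf_opp r) w = - sf_eval r w.
Proof.
  unfold sf_eval, sf_opp. simpl. rewrite lsum_map. simpl.
  rewrite (lsum_ext _ _ (fun p => -1 * (fst p * proves01 w (snd p)))) by (intros; ring).
  rewrite lsum_mull. ring.
Qed.

Lemma sf_value_opp r : sf_value (sf_opp r) = - sf_value r.
Proof.
  unfold sf_value, sf_opp. simpl. rewrite lsum_map. simpl.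
  rewrite (lsum_ext _ _ (fun p => -1 * (fst p * u (snd p)))) by (intros; ring).
  rewrite lsum_mull. ring.
Qed.

Lemma sf_eval_add r r' w : sf_eval (sf_add r r') w = sf_eval r w + sf_eval r' w.
Proof. unfold sf_eval, sf_add. simpl. rewrite lsum_app. ring. Qed.

Lemma sf_value_add r r' : sf_value (sf_add r r') = sf_value r + sf_value r'.
Proof. unfold sf_value, sf_add. simpl. rewrite lsum_app. ring. Qed.

Lemma sf_eval_const a w : sf_eval (a, []) w = a.
Proof. unfold sf_eval. simpl. rewrite lsum_nil. ring. Qed.

Lemma sf_value_const a : sf_value (a, []) = a.
Proof. unfold sf_value. simpl. rewrite lsum_nil. ring. Qed.

Lemma proves01_and w x y : proves01 w (And x y) = proves01 w x * proves01 w y.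
Proof.
  unfold proves01. destruct (excluded_middle_informative (deduces PT PF w (And x y))) as [d|d];
  destruct (excluded_middle_informative (deduces PT PF w x)) as [d1|d1];
  destruct (excluded_middle_informative (deduces PT PF w y)) as [d2|d2]; try ring;
  rewrite deduces_and in d; tauto.
Qed.

Lemma sf_eval_mul r r' w : sf_eval (sf_mul r r') w = sf_eval r w * sf_eval r' w.
Proof.
  unfold sf_eval, sf_mul. simpl. rewrite !lsum_app, !lsum_map, lsum_flat_map. simpl.
  rewrite (lsum_ext _ (fun p => lsum (map _ (snd r')) _)
    (fun p => lsum (snd r') (fun q => (fst p * proves01 w (snd p)) * (fst q * proves01 w (snd q))))).
  2:{ intros p _. rewrite lsum_map. apply lsum_ext. intros q _. simpl. rewrite proves01_and. ring. }
  rewrite <- lsum_mul.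
  rewrite (lsum_ext _ (fun p => fst r' * fst p * proves01 w (snd p))
             (fun p => fst r' * (fst p * proves01 w (snd p)))) by (intros; ring).
  rewrite (lsum_ext (snd r') (fun q => fst r * fst q * proves01 w (snd q))
             (fun q => fst r * (fst q * proves01 w (snd q)))) by (intros; ring).
  rewrite !lsum_mull. ring.
Qed.

Definition World := { x : fm | sat PT PF x }.

Definition t2 (phi : fm) : World -> Prop := fun w => deduces PT PF (proj1_sig w) phi.

Definition indicates (r : sfun) (A : World -> Prop) : Prop :=
  forall w : World, (A w -> sf_eval r (proj1_sig w) = 1) /\ (~ A w -> sf_eval r (proj1_sig w) = 0).

Definition Sig2 (A : World -> Prop) : Prop := exists r, indicates r A.

Definition lam2 (A : World -> Prop) : R :=
  sf_value (epsilon (inhabits (0, [])) (fun r => indicates r A)).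

Lemma indicates_01 r A (w : World) : indicates r A ->
  sf_eval r (proj1_sig w) = 0 \/ sf_eval r (proj1_sig w) = 1.
Proof. intros H. destruct (H w). destruct (classic (A w)); auto. Qed.

Lemma indicates_value_unique r r' A : indicates r A -> indicates r' A -> sf_value r = sf_value r'.
Proof.
  intros H1 H2.
  assert (Z : forall x, sat PT PF x -> sf_eval (sf_add r (sf_opp r')) x = 0).
  { intros x S. set (w := exist _ x S : World). rewrite sf_eval_add, sf_eval_opp.
    destruct (H1 w), (H2 w). change x with (proj1_sig w). destruct (classic (A w)).
    - rewrite H, H3; auto; ring.
    - rewrite H0, H4; auto; ring. }
  pose proof (sf_value_nonneg (sf_add r (sf_opp r'))) as G1.
  pose proof (sf_value_nonneg (sf_opp (sf_add r (sf_opp r')))) as G2.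
  rewrite sf_value_add, sf_value_opp in G1. rewrite sf_value_opp, sf_value_add, sf_value_opp in G2.
  assert (sf_value r + - sf_value r' >= 0) by (apply G1; intros; rewrite Z; auto; lra).
  assert (- (sf_value r + - sf_value r') >= 0)
    by (apply G2; intros; rewrite sf_eval_opp, Z; auto; lra).
  lra.
Qed.

Lemma lam2_indicates r A : indicates r A -> lam2 A = sf_value r.
Proof.
  intros H. unfold lam2. apply (indicates_value_unique _ _ A); auto.
  apply epsilon_spec. eauto.
Qed.

Lemma indicates_compl r A : indicates r A -> indicates (sf_add (1, []) (sf_opp r)) (fun w => ~ A w).
Proof.
  intros H w. rewrite sf_eval_add, sf_eval_opp, sf_eval_const.
  destruct (H w) as [H1 H2]. split; intros HA.
  - rewrite H2; auto. ring.
  - rewrite H1; [ring|]. now apply NNPP.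
Qed.

Lemma indicates_union r r' A B : indicates r A -> indicates r' B ->
  indicates (sf_add (sf_add r r') (sf_opp (sf_mul r r'))) (fun w => A w \/ B w).
Proof.
  intros H H' w. rewrite !sf_eval_add, sf_eval_opp, sf_eval_mul.
  destruct (H w) as [H1 H2]. destruct (H' w) as [H3 H4].
  destruct (classic (A w)) as [a|a]; destruct (classic (B w)) as [b|b];
    [rewrite H1, H3 | rewrite H1, H4 | rewrite H2, H3 | rewrite H2, H4]; auto;
    split; intros; try ring; tauto.
Qed.

Lemma indicates_t2 phi : indicates (0, [(1, phi)]) (t2 phi).
Proof.
  intros w. unfold sf_eval, t2, proves01. simpl. rewrite lsum_cons, lsum_nil. simpl.
  destruct (excluded_middle_informative _); split; intros; try tauto; ring.
Qed.

Lemma lam2_t2 phi : lam2 (t2 phi) = u phi.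
Proof.
  rewrite (lam2_indicates _ _ (indicates_t2 phi)). unfold sf_value. simpl.
  rewrite lsum_cons, lsum_nil. simpl. ring.
Qed.

Lemma lam2_range A : Sig2 A -> 0 <= lam2 A <= 1.
Proof.
  intros [r H]. rewrite (lam2_indicates r A H).
  assert (G1 : sf_value r >= 0).
  { apply sf_value_nonneg. intros x S. destruct (indicates_01 r A (exist _ x S) H); simpl in *; lra. }
  assert (G2 : sf_value (sf_add (1, []) (sf_opp r)) >= 0).
  { apply sf_value_nonneg. intros x S.
    destruct (indicates_01 _ _ (exist _ x S) (indicates_compl r A H)); simpl in *; lra. }
  rewrite sf_value_add, sf_value_opp, sf_value_const in G2. lra.
Qed.

Lemma indicates_empty : indicates (0, []) (fun _ => False).
Proof. intros w. rewrite sf_eval_const. tauto. Qed.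

Lemma indicates_full : indicates (1, []) (fun _ => True).
Proof. intros w. rewrite sf_eval_const. tauto. Qed.

Lemma model2_subjective : subjective_model PT PF Sig2 t2 lam2.
Proof.
  split; [|split; [|split]].
  - split; apply set_ext; intros [x [v [h1 [h2 h3]]]]; unfold t2; simpl; split; auto.
    + intros _ v' h1' _ _; auto.
    + intros H. specialize (H v h1 h2 h3). simpl in H. congruence.
    + tauto.
  - split; [|split].
    + exists (0, []). apply indicates_empty.
    + intros A [r H]. eexists; apply indicates_compl; eauto.
    + intros A B [r H] [r' H']. eexists; apply indicates_union; eauto.
  - intros phi. eexists; apply indicates_t2.
  - split; [|split].
    + apply lam2_range.
    + now rewrite (lam2_indicates _ _ indicates_empty), sf_value_const.
    + now rewrite (lam2_indicates _ _ indicates_full), sf_value_const.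
Qed.

Lemma model2_additive : additive Sig2 lam2.
Proof.
  intros A B [r H] [r' H'] D.
  rewrite (lam2_indicates (sf_add r r')), sf_value_add, (lam2_indicates r A), (lam2_indicates r' B);
    auto.
  intros w. rewrite sf_eval_add. destruct (H w) as [H1 H2]. destruct (H' w) as [H3 H4].
  destruct (classic (A w)) as [a|a]; destruct (classic (B w)) as [b|b];
    [exfalso; eauto | rewrite H1, H4 | rewrite H2, H3 | rewrite H2, H4]; auto;
    split; intros; try ring; tauto.
Qed.

Lemma model2_exact : exact PT PF t2.
Proof.
  intros phi psi [H1 H2]. apply set_ext; intros w. unfold t2. split; intros H v h1 h2 h3; eauto.
Qed.

Lemma model2_and_distributive : and_distributive t2.
Proof. intros phi psi. apply set_ext; intros w. apply deduces_and. Qed.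

End AdditiveModel.

Section Fields.
Context {Omega : Type} (Sigma : (Omega -> Prop) -> Prop) (HS : is_field Sigma).

Lemma field_inter A B : Sigma A -> Sigma B -> Sigma (fun w => A w /\ B w).
Proof.
  intros H1 H2. destruct HS as [_ [Hc Hu]].
  replace (fun w => A w /\ B w) with (fun w => ~ ((fun w => ~ A w) w \/ (fun w => ~ B w) w))
    by (apply set_ext; intros w; tauto).
  auto.
Qed.

Lemma field_diff A B : Sigma A -> Sigma B -> Sigma (fun w => A w /\ ~ B w).
Proof. intros. apply field_inter, HS; auto. Qed.

Lemma field_bigunion (A : nat -> Omega -> Prop) n : (forall i, (i < n)%nat -> Sigma (A i)) ->
  Sigma (fun w => exists i, (i < n)%nat /\ A i w).
Proof.
  induction n; intros H.
  - replace (fun w => exists i, (i < 0)%nat /\ A i w) with (fun _ : Omega => False); [apply HS|].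
    apply set_ext. intros w; split; [tauto|]. intros [i [Hi _]]; lia.
  - replace (fun w => exists i, (i < S n)%nat /\ A i w)
      with (fun w => (fun w => exists i, (i < n)%nat /\ A i w) w \/ A n w).
    { apply HS; auto. }
    apply set_ext. intros w; split.
    + intros [[i [Hi Ha]]|Ha]; [exists i|exists n]; split; auto; lia.
    + intros [i [Hi Ha]].
      destruct (Nat.eq_dec i n) as [->|Hne]; [now right|left; exists i; split; auto; lia].
Qed.

End Fields.

Section AdditiveModelBelief.
Context {P : Type} (PT PF : P) {Omega : Type} (Sigma : (Omega -> Prop) -> Prop)
  (t : form P -> Omega -> Prop) (lam : (Omega -> Prop) -> R)
  (Hsm : subjective_model PT PF Sigma t lam) (Hadd : additive Sigma lam)
  (Hexact : exact PT PF t) (Hand : and_distributive t).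

Definition region (x : form P) (E : list (form P)) : Omega -> Prop :=
  fun w => t x w /\ forall e, In e E -> ~ t e w.

Lemma excl_region E : forall x,
  Sigma (region x E) /\ excl (fun phi => lam (t phi)) x E = lam (region x E).
Proof.
  destruct Hsm as [_ [HF [Ht _]]].
  induction E as [|y E IH]; intros x.
  - replace (region x []) with (t x) by (apply set_ext; intros w; unfold region; simpl; tauto). auto.
  - destruct (IH x) as [S1 E1]. destruct (IH (And x y)) as [S2 E2].
    assert (Eq1 : region x (y :: E) = fun w => region x E w /\ ~ t y w).
    { apply set_ext; intros w; unfold region; simpl. split; [intros [h1 h2]; split; [split|]; auto|].
      intros [[h1 h2] h3]. split; auto. intros e [<-|He]; auto. }
    assert (Eq2 : region (And x y) E = fun w => region x E w /\ t y w).
    { apply set_ext; intros w; unfold region; rewrite Hand. tauto. }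
    assert (S3 : Sigma (region x (y :: E))) by (rewrite Eq1; apply field_diff; auto).
    split; auto. simpl. rewrite E1, E2.
    assert (Eq3 : region x E = fun w => region x (y :: E) w \/ region (And x y) E w).
    { rewrite Eq1, Eq2. apply set_ext; intros w. split; [|tauto].
      intros h. destruct (classic (t y w)); tauto. }
    rewrite Eq3 at 1. rewrite Hadd; auto; [ring|].
    intros w h1 h2. rewrite Eq1 in h1. rewrite Eq2 in h2. tauto.
Qed.

Lemma additive_model_belief : belief PT PF (fun phi => lam (t phi)).
Proof.
  destruct Hsm as [[HT HF] [_ [_ [Hb [L0 L1]]]]].
  split; [now rewrite HT|split; [now rewrite HF|]].
  apply ie_of_excl_nonneg; [intros x y H; now rewrite (Hexact x y H)|].
  intros x E. destruct (excl_region E x) as [S1 ->]. specialize (Hb _ S1). lra.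
Qed.

End AdditiveModelBelief.

Section SoundModelBelief.
Context {P : Type} (PT PF : P) {Omega : Type} (Sigma : (Omega -> Prop) -> Prop)
  (t : form P -> Omega -> Prop) (lam : (Omega -> Prop) -> R)
  (Hsm : subjective_model PT PF Sigma t lam) (Htm : totally_monotone Sigma lam)
  (Hsound : sound PT PF t).

(** Total monotonicity for the two disjoint sets [A] and [C \ A]. *)
Lemma tm_monotone A C : Sigma A -> Sigma C -> (forall w, A w -> C w) -> lam A <= lam C.
Proof.
  intros SA SC Sub. destruct Hsm as [_ [HF [_ [Hb [L0 _]]]]].
  set (A' := fun i : nat => if Nat.eqb i 0 then A else (fun w => C w /\ ~ A w)).
  assert (SD : Sigma (fun w => C w /\ ~ A w)) by (apply field_diff; auto).
  pose proof (Htm 2%nat A' (fun i _ => match i with 0 => SA | S _ => SD end)) as H.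
  change (nonempty_subsets 2%nat) with [[1%nat]; [0%nat]; [0%nat; 1%nat]] in H.
  cbn [map sum_list] in H.
  assert (E1 : (fun w => forall i, In i [1%nat] -> A' i w) = (fun w => C w /\ ~ A w)).
  { apply set_ext; intros w. split; intros h; [apply (h 1%nat); left; auto|intros i [<-|[]]; auto]. }
  assert (E2 : (fun w => forall i, In i [0%nat] -> A' i w) = A).
  { apply set_ext; intros w. split; intros h; [apply (h 0%nat); left; auto|intros i [<-|[]]; auto]. }
  assert (E3 : (fun w => forall i, In i [0%nat; 1%nat] -> A' i w) = (fun _ => False)).
  { apply set_ext; intros w. split; [|tauto]. intros h.
    pose proof (h 0%nat (or_introl eq_refl)). pose proof (h 1%nat (or_intror (or_introl eq_refl))).
    unfold A' in *; simpl in *. tauto. }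
  assert (E4 : (fun w => exists i, (i < 2)%nat /\ A' i w) = C).
  { apply set_ext; intros w. split.
    - intros [[|[|i]] [Hi h]]; unfold A' in h; simpl in h; [auto|tauto|lia].
    - intros h.
      destruct (classic (A w)); [exists 0%nat|exists 1%nat]; unfold A'; simpl; split; auto. }
  rewrite E1, E2, E3, E4, L0 in H. specialize (Hb _ SD). simpl in H. lra.
Qed.

Lemma inter_bigand (phi : nat -> form P) I : I <> [] ->
  (fun w => forall i, In i I -> t (phi i) w) = t (bigand PT phi I).
Proof.
  destruct Hsound as [_ [_ [_ Hand]]].
  induction I as [|i I IH]; intros H; [contradiction|]. destruct I as [|j I'].
  - apply set_ext; intros w. simpl. split; intros h; [apply h; auto|intros k [<-|[]]; auto].
  - change (bigand PT phi (i :: j :: I')) with (And (phi i) (bigand PT phi (j :: I'))).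
    rewrite Hand, <- IH by discriminate.
    apply set_ext; intros w. split; intros h.
    + split; [apply h; left; auto|]. intros k Hk; apply h; right; auto.
    + destruct h as [h1 h2]. intros k [<-|Hk]; auto.
Qed.

Lemma sound_model_belief : belief PT PF (fun phi => lam (t phi)).
Proof.
  destruct Hsm as [[HT HF] [HS [Ht [_ [L0 L1]]]]]. destruct Hsound as [_ [Hmon _]].
  split; [now rewrite HT|split; [now rewrite HF|]].
  intros n phi psi Hd.
  pose proof (Htm n (fun i => t (phi i)) (fun i _ => Ht (phi i))) as H.
  assert (M : lam (fun w => exists i, (i < n)%nat /\ t (phi i) w) <= lam (t psi)).
  { apply tm_monotone; auto; [apply field_bigunion; auto|]. intros w [i [Hi h]]. eapply Hmon; eauto. }
  change (sum_list (map ?f ?l)) with (lsum l f) in H. unfold nonempty_subsets in H.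
  rewrite (lsum_ext _ _ (fun I => (-1) ^ (length I + 1) * lam (t (bigand PT phi I)))) in H.
  2:{ intros I HI. apply filter_In in HI as [_ HI]. rewrite inter_bigand; auto.
      destruct I; simpl in HI; discriminate. }
  rewrite lsum_sign_nonempty in H. fold (even_subsets n) (odd_subsets n) in H. lra.
Qed.

End SoundModelBelief.

Section SoundModel.
Context {P : Type} (PT PF : P).
Notation fm := (form P).
Context (u : fm -> R) (Hbel : belief PT PF u).

Let Hex : u_exact PT PF u := ie_exact PT PF u (proj2 (proj2 Hbel)).

Definition Valuation := { v : P -> bool | v PT = true /\ v PF = false }.

Definition t3 (phi : fm) : Valuation -> Prop := fun w => feval (proj1_sig w) phi = true.

Definition Sig3 (A : Valuation -> Prop) : Prop := exists phi, A = t3 phi.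

Definition lam3 (A : Valuation -> Prop) : R :=
  u (epsilon (inhabits (Var PT)) (fun phi => A = t3 phi)).

Lemma t3_inj x y : t3 x = t3 y -> equiv PT PF x y.
Proof.
  intros H. apply equiv_of_feval. intros v h1 h2.
  pose proof (equal_f H (exist _ v (conj h1 h2))) as E. unfold t3 in E; simpl in E.
  apply eq_true_iff_eq. now rewrite E.
Qed.

Lemma lam3_t3 phi : lam3 (t3 phi) = u phi.
Proof.
  unfold lam3. apply Hex, t3_inj. symmetry.
  apply (epsilon_spec _ (fun psi => t3 phi = t3 psi)). eauto.
Qed.

Fixpoint bigor (phi : nat -> fm) (n : nat) : fm :=
  match n with 0 => Var PF | S m => Or (bigor phi m) (phi m) end.

Lemma feval_bigor v phi n : v PF = false ->
  (feval v (bigor phi n) = true <-> exists i, (i < n)%nat /\ feval v (phi i) = true).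
Proof.
  intros h. induction n; simpl.
  - rewrite h. split; [discriminate|]. intros [i [Hi _]]; lia.
  - rewrite orb_true_iff, IHn. split.
    + intros [[i [Hi H]]|H]; [exists i|exists n]; split; auto; lia.
    + intros [i [Hi H]].
      destruct (Nat.eq_dec i n) as [->|Hne]; [now right|left; exists i; split; auto; lia].
Qed.

Lemma t3_F : t3 (Var PF) = fun _ => False.
Proof.
  apply set_ext; intros [v [h1 h2]]. unfold t3; simpl. rewrite h2. split; [discriminate|tauto].
Qed.

Lemma t3_T : t3 (Var PT) = fun _ => True.
Proof. apply set_ext; intros [v [h1 h2]]. unfold t3; simpl. rewrite h1. tauto. Qed.

Lemma model3_sound : sound PT PF t3.
Proof.
  split; [|split; [|split]].
  - intros x y [H1 H2]. apply set_ext; intros [v [h1 h2]]. unfold t3; simpl. split; auto.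
  - intros x y H [v [h1 h2]]. unfold t3; simpl. auto.
  - intros x. apply set_ext; intros w. unfold t3; simpl.
    destruct (feval (proj1_sig w) x); simpl; intuition discriminate.
  - intros x y. apply set_ext; intros w. unfold t3; simpl. apply andb_true_iff.
Qed.

Lemma model3_subjective : subjective_model PT PF Sig3 t3 lam3.
Proof.
  split; [|split; [|split]].
  - split; [apply t3_T|apply t3_F].
  - destruct model3_sound as [_ [_ [Hneg _]]]. split; [|split].
    + exists (Var PF). now rewrite t3_F.
    + intros A [phi ->]. exists (Neg phi). now rewrite Hneg.
    + intros A B [phi ->] [psi ->]. exists (Or phi psi). apply set_ext; intros w. unfold t3; simpl.
      now rewrite orb_true_iff.
  - intros phi; now exists phi.
  - split; [|split].
    + intros A [phi ->]. rewrite lam3_t3. now apply (belief_range PT PF).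
    + rewrite <- t3_F, lam3_t3. exact (proj1 (proj2 Hbel)).
    + rewrite <- t3_T, lam3_t3. exact (proj1 Hbel).
Qed.

(** Total monotonicity of [lam3] is inclusion/exclusion for [phi_0, ..., phi_(n-1)] below their
    disjunction. *)
Lemma model3_totally_monotone : totally_monotone Sig3 lam3.
Proof.
  intros n A HA.
  set (phi := fun i => epsilon (inhabits (Var PT)) (fun psi => A i = t3 psi)).
  assert (Hphi : forall i, (i < n)%nat -> A i = t3 (phi i))
    by (intros i Hi; apply epsilon_spec, HA, Hi).
  assert (EU : (fun w => exists i, (i < n)%nat /\ A i w) = t3 (bigor phi n)).
  { apply set_ext; intros [v [h1 h2]]. unfold t3 at 1; simpl. rewrite feval_bigor by auto.
    split; intros [i [Hi H]]; exists i; split; auto;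
      [rewrite (Hphi i Hi) in H|rewrite (Hphi i Hi)]; auto. }
  rewrite EU, lam3_t3. change (sum_list (map ?f ?l)) with (lsum l f). unfold nonempty_subsets.
  rewrite (lsum_ext _ _ (fun I => (-1) ^ (length I + 1) * u (bigand PT phi I))).
  2:{ intros I HI. apply filter_In in HI as [HI _]. f_equal. rewrite <- lam3_t3. f_equal.
      apply set_ext; intros [v [h1 h2]]. unfold t3; simpl.
      rewrite feval_bigand, forallb_forall by auto.
      assert (Hin : forall i, In i I -> (i < n)%nat)
        by (intros i Hi; apply in_seq with (start := 0%nat); eapply in_subsets_incl; eauto).
      split; intros H i Hi; [specialize (H i Hi); rewrite (Hphi i (Hin i Hi)) in H; exact H|].
      rewrite (Hphi i (Hin i Hi)). exact (H i Hi). }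
  rewrite lsum_sign_nonempty. fold (even_subsets n) (odd_subsets n).
  enough (u (bigor phi n) + lsum (even_subsets n) (fun I => u (bigand PT phi I))
            >= lsum (odd_subsets n) (fun I => u (bigand PT phi I))) by lra.
  apply (proj2 (proj2 Hbel)). intros i Hi v h1 h2 h3. apply feval_bigor; eauto.
Qed.

End SoundModel.

Theorem proposition7 (P : Type) (PT PF : P) (HTF : PT <> PF)
    (pref : (form P -> R) -> (form P -> R) -> Prop) :
  (NonTriviality PT PF pref /\ ObjectiveEU pref /\ InclusionExclusion PT PF pref
   <->
   exists (Omega : Type) (Sigma : (Omega -> Prop) -> Prop)
          (t : form P -> Omega -> Prop) (lam : (Omega -> Prop) -> R),
     subjective_model PT PF Sigma t lam /\ additive Sigma lam /\
     exact PT PF t /\ and_distributive t /\ represents pref t lam)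
  /\
  (NonTriviality PT PF pref /\ ObjectiveEU pref /\ InclusionExclusion PT PF pref
   <->
   exists (Omega' : Type) (Sigma' : (Omega' -> Prop) -> Prop)
          (t' : form P -> Omega' -> Prop) (lam' : (Omega' -> Prop) -> R),
     subjective_model PT PF Sigma' t' lam' /\ totally_monotone Sigma' lam' /\
     sound PT PF t' /\ represents pref t' lam').
Proof.
  split; rewrite axioms_iff_belief_rep; split.
  - intros [u [Hu Hr]]. exists (World PT PF), (Sig2 PT PF), (t2 PT PF), (lam2 PT PF u).
    split; [|split; [|split; [|split]]].
    + exact (model2_subjective PT PF u Hu).
    + exact (model2_additive PT PF u Hu).
    + apply model2_exact.
    + apply model2_and_distributive.
    + apply represents_eu_rep. erewrite functional_extensionality; [exact Hr|].
      intros phi. exact (lam2_t2 PT PF u Hu phi).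
  - intros (Omega & Sigma & t & lam & Hm & Ha & He & Hd & Hr).
    exists (fun phi => lam (t phi)). split; [|now apply represents_eu_rep].
    exact (additive_model_belief PT PF Sigma t lam Hm Ha He Hd).
  - intros [u [Hu Hr]]. exists (Valuation PT PF), (Sig3 PT PF), (t3 PT PF), (lam3 PT PF u).
    split; [|split; [|split]].
    + exact (model3_subjective PT PF u Hu).
    + exact (model3_totally_monotone PT PF u Hu).
    + apply model3_sound.
    + apply represents_eu_rep. erewrite functional_extensionality; [exact Hr|].
      intros phi. exact (lam3_t3 PT PF u Hu phi).
  - intros (Omega & Sigma & t & lam & Hm & Htm & Hs & Hr).
    exists (fun phi => lam (t phi)). split; [|now apply represents_eu_rep].
    exact (sound_model_belief PT PF Sigma t lam Hm Htm Hs).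
Qed.
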